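(* Let $1\le k\le n$ and $(\pi,S)\in\mathcal{B}^{>}_{n-1,k-1}$. Then (a) $\mathrm{fmaj}(\phi^{*}_{n,k}(i,(\pi,S)))=\mathrm{fmaj}((\pi,S))+2i-1$ for every $i\in\{1,\dots,n-k\}$; (b) $\mathrm{fmaj}(\phi^{*}_{\overline{n},k}(i,(\pi,S)))=\mathrm{fmaj}((\pi,S))+2i-2$ for every $i\in\{1,\dots,n-k\}$; (c) $\mathrm{fmaj}(\phi^{*}_{\overline{n},k}(0,(\pi,S)))=\mathrm{fmaj}((\pi,S))+2n-2k$.
   Context: $\mathcal{B}_m$ is the group of signed permutations of $[m]$ (bijections $\pi$ of $\{\pm1,\dots,\pm m\}$ with $\pi(-i)=-\pi(i)$, written $\pi=\pi_1\cdots\pi_m$), integers ordered naturally, $\overline{x}=-x$. Set $\pi_0=0$; $\mathrm{Des}_B(\pi)=\{i\in\{0,\dots,m-1\}:\pi_i>\pi_{i+1}\}$, $\mathrm{neg}(\pi)=|\{i:\pi_i<0\}|$, $\mathrm{fmaj}(\pi)=\sum_{i\in\mathrm{Des}_B(\pi)}2i+\mathrm{neg}(\pi)$. Let $\mathcal{B}^{>}_{m,k}=\{(\pi,S):\pi\in\mathcal{B}_m,\ S\subseteq\mathrm{Des}_B(\pi),\ |S|=k\}$ and for $(\pi,S)\in\mathcal{B}^{>}_{m,k}$, $\mathrm{fmaj}((\pi,S))=\mathrm{fmaj}(\pi)-\sum_{j\in S}\bigl(2|\mathrm{Des}_B(\pi)\cap\{j,\dots,m-1\}|-1\bigr)$.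 Positions: for $p\in\{0,\dots,m\}$, position $p$ is the space immediately after $\pi_p$. The fmaj-labelling of $(\pi,S)\in\mathcal{B}^{>}_{m,k}$ labels positions not in $S$: position $m$ gets label $0$; positions in $\mathrm{Des}_B(\pi)\setminus S$ get labels $1,2,\dots$ from right to left; remaining positions in $\{0,\dots,m-1\}\setminus\mathrm{Des}_B(\pi)$ get the next consecutive labels from left to right (labels $0,\dots,m-k$). For $\alpha\in\{n,\overline{n}\}$, $(\pi,S)\in\mathcal{B}^{>}_{n-1,k-1}$ and a label $i$, let $p$ be the position with label $i$, $\tau=\pi_1\cdots\pi_p\,\alpha\,\pi_{p+1}\cdots\pi_{n-1}\in\mathcal{B}_n$; starred positions $j\in S$ with $j<p$ stay at $j$, each starred $j\in S$ with $j>p$ is replaced by the largest element of $\mathrm{Des}_B(\tau)$ smaller than $j+1$; finally the largest element of $\mathrm{Des}_B(\tau)$ is added to the set of starred positions, giving $T$. Define $\phi^{*}_{\alpha,k}(i,(\pi,S))=(\tau,T)$; this gives maps $\phi^{*}_{n,k}:\{1,\dots,n-k\}\times\mathcal{B}^{>}_{n-1,k-1}\to\mathcal{B}^{>}_{n,k}$ and $\phi^{*}_{\overline{n},k}:\{0,1,\dots,n-k\}\times\mathcal{B}^{>}_{n-1,k-1}\to\mathcal{B}^{>}_{n,k}$. *)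

From mathcomp Require Import all_boot all_order all_algebra.
Set Implicit Arguments. Unset Strict Implicit. Unset Printing Implicit Defensive.
Import Order.TTheory GRing.Theory Num.Theory.

Definition signed_perm (m : nat) (s : seq int) : bool :=
  (size s == m) && perm_eq (map absz s) (iota 1 m).

(* pi_i with the convention pi_0 = 0 *)
Definition pi_at (s : seq int) (i : nat) : int :=
  if i is i'.+1 then nth 0%R s i' else 0%R.

Definition desB (s : seq int) : seq nat :=
  [seq i <- iota 0 (size s) | (pi_at s i.+1 < pi_at s i)%R].

Definition negB (s : seq int) : nat := count (fun x : int => (x < 0)%R) s.

Definition fmajB (s : seq int) : nat := \sum_(d <- desB s) 2 * d + negB s.

(* fmaj((pi,S)); S is a duplicate-free list representing a set *)
Definition fmajS (s : seq int) (S : seq nat) : int :=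
  ((fmajB s)%:Z - \sum_(j <- S)
     ((2 * count (fun d => (j <= d)%N) (desB s))%:Z - 1))%R.

Definition BS (m k : nat) (s : seq int) (S : seq nat) : Prop :=
  [/\ signed_perm m s, uniq S, {subset S <= desB s} & size S = k].

(* Positions listed by fmaj-label: the entry of index i is the position
   carrying label i. *)
Definition label_positions (s : seq int) (S : seq nat) : seq nat :=
  size s :: rev [seq d <- desB s | d \notin S]
         ++ [seq p <- iota 0 (size s) | p \notin desB s].

Definition pos_of_label (s : seq int) (S : seq nat) (i : nat) : nat :=
  nth 0 (label_positions s S) i.

(* phi^*_{alpha,k}(i,(pi,S)) = (tau, T); T is returned as a duplicate-free list *)
Definition phi_tau (alpha : int) (i : nat) (s : seq int) (S : seq nat) : seq int :=
  let p := pos_of_label s S i in take p s ++ alpha :: drop p s.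

Definition phi_T (alpha : int) (i : nat) (s : seq int) (S : seq nat) : seq nat :=
  let p := pos_of_label s S i in
  let t := phi_tau alpha i s S in
  undup (rcons
    [seq (if j < p then j else \max_(d <- desB t | d < j.+1) d) | j <- S]
    (\max_(d <- desB t) d)).

From mathcomp Require Import all_boot all_order all_algebra.
From mathcomp Require Import zify.
Import Order.TTheory GRing.Theory Num.Theory.
Set Implicit Arguments. Unset Strict Implicit. Unset Printing Implicit Defensive.

(* Insert alpha = +-n at position p of pi to get tau.  As |alpha| exceeds every |pi_i|,
   the descents of tau are those of pi below p, those above p shifted by one, and one new
   descent, at p if alpha < 0 and at p+1 otherwise; a descent of pi at p is lost.  This
   gives fmaj tau - fmaj pi.  A starred descent j < p stays put and one j > p moves to the
   largest descent of tau not exceeding j, so the weight 2 #{descents >= j} - 1 it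
   subtracts grows by 2, except when j < p and p was a descent; the new star on the last
   descent subtracts 1.  Finally the label i of p counts, from the right, the unstarred
   descents above p, or else all unstarred descents and then the non-descents below p;
   this turns the total change into 2i - 1, 2i - 2 or 2n - 2k. *)

Lemma count_rel_nth_sorted (T : eqType) (r : rel T) (x0 : T) (l : seq T) t :
  transitive r -> irreflexive r -> sorted r l -> t < size l ->
  count (r^~ (nth x0 l t)) l = t.
Proof.
move=> r_tr r_irr; elim: l t => [|x l IHl] [|t] //= r_xl lt_t.
- rewrite r_irr add0n; apply/eqP; rewrite -leqn0 leqNgt -has_count.
  apply/hasPn => y /(allP (order_path_min r_tr r_xl)) r_xy.
  by apply/negP => r_yx; move: (r_irr x); rewrite (r_tr _ _ _ r_xy r_yx).
- have r_x : r x (nth x0 l t).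
    by apply: (allP (order_path_min r_tr r_xl)); rewrite mem_nth.
  by rewrite r_x IHl ?(path_sorted r_xl).
Qed.

Lemma count_predI_mem_sub (T : eqType) (P : pred T) (D S : seq T) :
  uniq D -> uniq S -> {subset S <= D} -> count (predI P (mem S)) D = count P S.
Proof.
move=> uD uS sSD; rewrite -count_filter.
have /permP -> // : perm_eq [seq x <- D | x \in S] S.
apply: uniq_perm; rewrite ?filter_uniq // => x; rewrite mem_filter.
by case xS: (x \in S) => //; rewrite (sSD _ xS).
Qed.

Lemma count_mem_sub (T : eqType) (D S : seq T) :
  uniq D -> uniq S -> {subset S <= D} -> count (mem S) D = size S.
Proof. by move=> uD uS sSD; rewrite -count_predT -(count_predI_mem_sub predT uD uS sSD). Qed.

Lemma count_split_mem (T : eqType) (P : pred T) (D S : seq T) :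
  count P D = count (predI P (mem S)) D + count (predI P (predC (mem S))) D.
Proof. by elim: D => //= x D ->; case: (P x); case: (x \in S) => /=; lia. Qed.

Lemma count_ge_max_le (l : seq nat) m j : uniq l -> m \in l -> m <= j ->
  (forall x, x \in l -> x <= j -> x <= m) ->
  count (fun d => m <= d) l = 1 + count (fun d => j < d) l.
Proof.
move=> ul ml le_mj max_m; rewrite (count_split_mem _ l [:: m]).
have -> : count (predI (fun d => m <= d) (mem [:: m])) l = 1.
  rewrite -[1]/(nat_of_bool true) -ml -(count_uniq_mem m ul).
  by apply: eq_count => d; rewrite /= inE andb_idl // => /eqP ->.
congr addn; apply: eq_in_count => d ld /=; rewrite inE.
case: leqP => [le_dj | lt_jd].
  by have := max_m d ld le_dj; rewrite eqn_leq => ->; rewrite andbN.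
rewrite (leq_trans le_mj (ltnW lt_jd)); apply/eqP => de; move: lt_jd.
by rewrite de ltnNge le_mj.
Qed.

Lemma bigmax_mem (l : seq nat) (P : pred nat) :
  has P l -> \max_(d <- l | P d) d \in l.
Proof.
elim: l => //= y l IHl; rewrite big_cons inE.
case: ifP => [_ _|_ /= /IHl ->]; last exact: orbT.
have [/IHl lmax|nPl] := boolP (has P l); last by rewrite big_hasC // maxn0 eqxx.
by rewrite /maxn; case: ltnP; rewrite ?eqxx ?lmax ?orbT.
Qed.

Lemma bigmax_ltS_spec (l : seq nat) j x : x \in l -> x <= j ->
  [/\ \max_(d <- l | d < j.+1) d \in l, \max_(d <- l | d < j.+1) d <= j &
      forall y, y \in l -> y <= j -> y <= \max_(d <- l | d < j.+1) d].
Proof.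
move=> xl le_xj; split.
- by apply: bigmax_mem; apply/hasP; exists x.
- by apply/bigmax_leqP_seq.
- by move=> y yl le_yj; apply: leq_bigmax_seq.
Qed.

Lemma sumz_count (T : Type) (l : seq T) (P : pred T) k :
  (\sum_(x <- l) Posz (k * P x))%R = Posz (k * count P l).
Proof.
by elim: l => [|x l IHl]; rewrite ?big_nil ?big_cons ?muln0 // IHl /=; lia.
Qed.

Lemma mem_map_succn (l : seq nat) d : (d \in map succn l) = (0 < d) && (d.-1 \in l).
Proof. by case: d => [|d] /=; [apply/mapP => -[] | rewrite mem_map //; apply: succn_inj]. Qed.

Lemma perm_split_at (l : seq nat) p : uniq l ->
  perm_eq l ((if p \in l then [:: p] else [::]) ++ [seq d <- l | d < p] ++ [seq d <- l | p < d]).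
Proof.
move=> ul; have -> : (if p \in l then [:: p] else [::]) = [seq d <- l | d == p].
  case: ifP => [pl|pl]; first by rewrite filter_pred1_uniq.
  by apply/esym/eqP; rewrite -size_eq0 size_filter (count_uniq_mem p ul) pl.
apply/permP => a; rewrite !count_cat !count_filter.
elim: l {ul} => //= x l ->; case: ltngtP => _; case: (a x) => /=; lia.
Qed.

Definition des (s : seq int) (d : nat) : bool := (pi_at s d.+1 < pi_at s d)%R.

Lemma mem_desB s d : (d \in desB s) = (d < size s) && des s d.
Proof. by rewrite mem_filter mem_iota andbC. Qed.

Lemma uniq_desB s : uniq (desB s).
Proof. exact/filter_uniq/iota_uniq. Qed.

Lemma sorted_desB s : sorted ltn (desB s).
Proof. exact/sorted_filter/iota_ltn_sorted/ltn_trans. Qed.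

Definition des_lo s p := [seq d <- desB s | d < p].
Definition des_hi s p := [seq d <- desB s | p < d].

Lemma des_hi_size s : des_hi s (size s) = [::].
Proof.
rewrite /des_hi (eq_in_filter (a2 := pred0)) ?filter_pred0 // => d.
by rewrite mem_desB => /andP[lt_ds _]; rewrite ltnNge ltnW.
Qed.

Lemma perm_desB_split s p :
  perm_eq (desB s) ((if p \in desB s then [:: p] else [::]) ++ des_lo s p ++ des_hi s p).
Proof. exact/perm_split_at/uniq_desB. Qed.

Lemma absz_pi_at_le m s x : signed_perm m s -> absz (pi_at s x) <= m.
Proof.
case/andP => /eqP <- perm_s; case: x => [|x] //=.
have [lt_xs|] := ltnP x (size s); last by move/(nth_default 0%R) ->.
have : absz (nth 0%R s x) \in iota 1 (size s) by rewrite -(perm_mem perm_s) map_f ?mem_nth.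
by rewrite mem_iota add1n ltnS => /andP[].
Qed.

Lemma count_des_hi s p (P : pred nat) : (forall d, p < d -> P d) ->
  count P (des_hi s p) = size (des_hi s p).
Proof.
move=> HP; rewrite -count_predT.
by apply: eq_in_count => d; rewrite mem_filter => /andP[/HP].
Qed.

Lemma count_des_lo s p (P : pred nat) : (forall d, d < p -> P d = false) ->
  count P (des_lo s p) = 0.
Proof.
move=> HP; rewrite (eq_in_count (a2 := pred0)) ?count_pred0 // => d.
by rewrite mem_filter => /andP[/HP].
Qed.

Definition ins p (a : int) (s : seq int) := take p s ++ a :: drop p s.

(* The descent created by inserting [a]: just before [a] if [a < 0], just after it otherwise. *)
Definition ins_des (a : int) p : nat := if (a < 0)%R then p else p.+1.

Section Insertion.

Variables (s : seq int) (a : int) (p : nat).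
Hypothesis le_p_s : p <= size s.

Lemma size_ins : size (ins p a s) = (size s).+1.
Proof. by rewrite size_cat /= size_takel // size_drop addnS subnKC. Qed.

Lemma pi_at_ins x : pi_at (ins p a s) x =
  if x <= p then pi_at s x else if x == p.+1 then a else pi_at s x.-1.
Proof.
case: x => [|x] //=; rewrite nth_cat size_takel // eqSS.
case: ltngtP => [lt_xp|lt_px|->]; rewrite ?nth_take ?subnn //.
case: x lt_px => // x lt_px; rewrite subSn //= nth_drop; congr nth; lia.
Qed.

Lemma des_ins d : des (ins p a s) d =
  if d < p then des s d
  else if d == p then (a < pi_at s p)%R
  else if d == p.+1 then (pi_at s p.+1 < a)%R
  else des s d.-1.
Proof.
rewrite /des !pi_at_ins eqSS.
case: (ltngtP d p) => [lt_dp|lt_pd|->]; rewrite ?eqxx ?(ltnW lt_dp) //.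
by case: eqP => [->|_] //; case: d lt_pd.
Qed.

Hypothesis lt_abs_a : forall x, absz (pi_at s x) < absz a.
Hypothesis p_lt_of_a_pos : (0 < a)%R -> p < size s.

Lemma lt_a_pi_at x : (a < pi_at s x)%R = (a < 0)%R.
Proof. by have := lt_abs_a x; have := lt_abs_a 0; lia. Qed.

Lemma pi_at_lt_a x : (pi_at s x < a)%R = (0 < a)%R.
Proof. by have := lt_abs_a x; have := lt_abs_a 0; lia. Qed.

Lemma mem_desB_ins d : (d \in desB (ins p a s)) =
  [|| d == ins_des a p, d \in des_lo s p | d \in map succn (des_hi s p)].
Proof.
rewrite mem_desB size_ins des_ins lt_a_pi_at pi_at_lt_a mem_map_succn.
rewrite /des_lo /des_hi !(mem_filter _ _ (desB s)) mem_desB /ins_des.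
case: (ltngtP d p) => [lt_dp|lt_pd|->].
- have lt_ds := leq_trans lt_dp le_p_s.
  rewrite ltnS (ltnW lt_ds) lt_ds (_ : p < d.-1 = false) ?andbF ?orbF /=; last by lia.
  by case: ifP => _; rewrite ?(ltn_eqF lt_dp) ?(ltn_eqF (ltn_trans lt_dp (ltnSn p))).
- case: d lt_pd => // d lt_pd /=; rewrite !ltnS eqSS.
  case: eqP => [->|/eqP ne_dp]; rewrite ?ltnn ?andbF ?orbF.
    case: (ltrgtP a 0) => [a_neg|a_pos|a0]; first by rewrite andbF (gtn_eqF (ltnSn p)).
      by rewrite p_lt_of_a_pos ?eqxx.
    by move: (lt_abs_a 0); rewrite a0.
  have lt_pd' : p < d by rewrite ltn_neqAle eq_sym ne_dp -ltnS.
  by rewrite lt_pd' mem_desB; case: ifP => _; rewrite gtn_eqF ?ltnS.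
- rewrite ltnS le_p_s (ltnNge p p.-1) leq_pred !andbF !orbF.
  by case: ifP => _; rewrite ?eqxx ?(ltn_eqF (ltnSn p)).
Qed.

Lemma perm_desB_ins :
  perm_eq (desB (ins p a s)) (ins_des a p :: des_lo s p ++ map succn (des_hi s p)).
Proof.
apply: uniq_perm => [||d]; rewrite ?uniq_desB //; last first.
  by rewrite mem_desB_ins in_cons mem_cat orbA.
have le_p_e : p <= ins_des a p by rewrite /ins_des; case: ifP.
have le_e_p1 : ins_des a p <= p.+1 by rewrite /ins_des; case: ifP.
rewrite /= cat_uniq (map_inj_uniq succn_inj) ?filter_uniq ?uniq_desB ?iota_uniq //=.
rewrite mem_cat negb_or !mem_filter mem_map_succn mem_filter -andbA; apply/and3P; split.
- by rewrite ltnNge le_p_e.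
- by apply/negP => /and3P[_ + _]; lia.
- rewrite andbT; apply/hasPn => d; rewrite mem_map_succn mem_filter mem_filter => /and3P[_ + _].
  by rewrite mem_filter => lt_pd; apply/negP => /andP[+ _]; lia.
Qed.

Lemma negB_ins : negB (ins p a s) = negB s + (a < 0)%R.
Proof. by rewrite /negB -{2}(cat_take_drop p s) !count_cat /= [_ + count _ _]addnC addnA. Qed.

Lemma fmajB_ins : fmajB (ins p a s) + (p \in desB s) * (2 * p) =
  fmajB s + 2 * ins_des a p + 2 * size (des_hi s p) + (a < 0)%R.
Proof.
rewrite /fmajB negB_ins (perm_big _ perm_desB_ins) (perm_big _ (perm_desB_split s p)).
have sum_succ l : \sum_(d <- l) 2 * d.+1 = \sum_(d <- l) 2 * d + 2 * size l.
  by elim: l => [|x l IHl]; rewrite ?big_nil ?big_cons //= IHl; lia.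
rewrite big_cons !big_cat big_map sum_succ /=.
by case: (p \in desB s); rewrite ?big_seq1 ?big_nil /=; lia.
Qed.

End Insertion.

Definition star_weight (s : seq int) (j : nat) : int :=
  ((2 * count (fun d => (j <= d)%N) (desB s))%:Z - 1)%R.

Lemma fmajSE s S : fmajS s S = ((fmajB s)%:Z - \sum_(j <- S) star_weight s j)%R.
Proof. by []. Qed.

Section Starred.

Variables (s : seq int) (S : seq nat) (a : int) (p : nat).
Hypothesis le_p_s : p <= size s.
Hypothesis lt_abs_a : forall x, absz (pi_at s x) < absz a.
Hypothesis p_lt_of_a_pos : (0 < a)%R -> p < size s.
Hypothesis uniq_S : uniq S.
Hypothesis sub_S : {subset S <= desB s}.
Hypothesis p_notin_S : p \notin S.

Local Notation t := (ins p a s).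
(* Where [phi_T] moves a starred descent [j > p]; by [floor_id] also right for [j < p]. *)
Local Notation floor j := (\max_(d <- desB t | d < j.+1) d).
Local Notation top := (\max_(d <- desB t) d).

Lemma ins_des_in : ins_des a p \in desB t.
Proof. by rewrite mem_desB_ins // eqxx. Qed.

Lemma le_p_ins_des : p <= ins_des a p <= p.+1.
Proof. by rewrite /ins_des; case: ifP => _; rewrite leqnSn leqnn. Qed.

Lemma des_lo_in j : j \in S -> j < p -> j \in desB t.
Proof. by move=> jS lt_jp; rewrite mem_desB_ins // mem_filter lt_jp sub_S ?orbT. Qed.

Lemma des_hi_in j : j \in S -> p < j -> j.+1 \in desB t.
Proof.
move=> jS lt_pj; rewrite mem_desB_ins // mem_map_succn /=.
by rewrite [j \in _]mem_filter lt_pj sub_S ?orbT.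
Qed.

Lemma floorP j : j \in S ->
  [/\ floor j \in desB t, floor j <= j & forall y, y \in desB t -> y <= j -> y <= floor j].
Proof.
move=> jS; case: (ltngtP j p) => [lt_jp|lt_pj|eq_jp].
- exact: bigmax_ltS_spec (des_lo_in jS lt_jp) (leqnn j).
- by case/andP: le_p_ins_des => _ le; exact: bigmax_ltS_spec ins_des_in (leq_trans le lt_pj).
- by move: p_notin_S; rewrite -eq_jp jS.
Qed.

Lemma floor_id j : j \in S -> j < p -> floor j = j.
Proof.
move=> jS lt_jp; have [_ le_fj ub] := floorP jS.
by apply/eqP; rewrite eqn_leq le_fj ub ?des_lo_in.
Qed.

Lemma floor_lt_of j j' x : j \in S -> j' \in S -> x \in desB t -> j < x <= j' -> floor j < floor j'.
Proof.
move=> jS j'S xt /andP[lt_jx le_xj']; have [_ le_fj _] := floorP jS.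
have [_ _ ub] := floorP j'S; exact: leq_ltn_trans le_fj (leq_trans lt_jx (ub x xt le_xj')).
Qed.

Lemma floor_lt j j' : j \in S -> j' \in S -> j < j' -> floor j < floor j'.
Proof.
move=> jS j'S lt_jj'; have [le_p_e le_e_p1] := andP le_p_ins_des.
have ne_p x : x \in S -> x != p by move=> xS; apply: contraNneq p_notin_S => <-.
have [lt_j'p|le_pj'] := ltnP j' p.
  by apply: floor_lt_of jS j'S (des_lo_in j'S lt_j'p) _; rewrite lt_jj' leqnn.
have lt_pj' : p < j' by rewrite ltn_neqAle eq_sym ne_p.
have [lt_jp|le_pj] := ltnP j p.
  by apply: floor_lt_of jS j'S ins_des_in _; rewrite (leq_trans lt_jp le_p_e) (leq_trans le_e_p1).
have lt_pj : p < j by rewrite ltn_neqAle eq_sym ne_p.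
by apply: floor_lt_of jS j'S (des_hi_in jS lt_pj) _; rewrite ltnSn.
Qed.

Lemma floor_lt_top j : j \in S -> floor j < top.
Proof.
move=> jS; have [_ le_fj _] := floorP jS; apply: leq_ltn_trans le_fj _.
have [lt_jp|lt_pj|eq_jp] := ltngtP j p; last by move: p_notin_S; rewrite -eq_jp jS.
  have [le_p_e _] := andP le_p_ins_des.
  exact: leq_trans (leq_trans lt_jp le_p_e) (leq_bigmax_seq _ ins_des_in isT).
exact: leq_bigmax_seq _ (des_hi_in jS lt_pj) isT.
Qed.

Lemma uniq_starred : uniq (rcons [seq floor j | j <- S] top).
Proof.
have top_notin : top \notin [seq floor j | j <- S].
  by apply/mapP => -[j jS top_eq]; have := floor_lt_top jS; rewrite -top_eq ltnn.
rewrite rcons_uniq top_notin map_inj_in_uniq // => j j' jS j'S eq_f; case: (ltngtP j j') => // lt.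
  by have := floor_lt jS j'S lt; rewrite eq_f ltnn.
by have := floor_lt j'S jS lt; rewrite eq_f ltnn.
Qed.

Lemma count_ge_floor j : j \in S ->
  count (fun d => floor j <= d) (desB t) =
  count (fun d => j <= d) (desB s) + ((j < p) ==> (p \notin desB s)).
Proof.
move=> jS; have [ft le_fj ub] := floorP jS; have [le_p_e le_e_p1] := andP le_p_ins_des.
rewrite (count_ge_max_le (uniq_desB _) ft le_fj ub).
have /permP -> := perm_desB_ins le_p_s lt_abs_a p_lt_of_a_pos.
have /permP -> := perm_desB_split s p.
rewrite -cat1s !count_cat count_map.
have [lt_jp|lt_pj|eq_jp] := ltngtP j p; last by move: p_notin_S; rewrite -eq_jp jS.
- have jlo : j \in des_lo s p by rewrite mem_filter lt_jp sub_S.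
  rewrite (count_ge_max_le (filter_uniq _ (uniq_desB s)) jlo (leqnn j) (fun _ _ le => le)).
  have hi_le : count (fun d => j <= d) (des_hi s p) = size (des_hi s p).
    by apply: count_des_hi => d; lia.
  rewrite hi_le -/(des_lo s p) [count _ [:: _]]/= (leq_trans lt_jp le_p_e).
  by case: (p \in desB s); rewrite /= ?(ltnW lt_jp); set c := count _ _; lia.
- have lo_lt : count (fun d => j < d) (des_lo s p) = 0 by apply: count_des_lo => d; lia.
  have lo_le : count (fun d => j <= d) (des_lo s p) = 0 by apply: count_des_lo => d; lia.
  rewrite lo_lt lo_le [count _ [:: _]]/= ltnNge (leq_trans le_e_p1 lt_pj).
  by case: (p \in desB s); rewrite /= ?(leqNgt j p) ?lt_pj; set c := count _ (des_hi s p); lia.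
Qed.

Lemma count_ge_top : count (fun d => top <= d) (desB t) = 1.
Proof.
have top_in : top \in desB t.
  by apply: bigmax_mem; apply/hasP; exists (ins_des a p); rewrite ?ins_des_in.
have ub y : y \in desB t -> y <= top by move=> yt; apply: leq_bigmax_seq.
rewrite (count_ge_max_le (uniq_desB _) top_in (leqnn top)) => [|y yt _]; last exact: ub.
by rewrite (eq_in_count (a2 := pred0)) ?count_pred0 // => y /ub; rewrite ltnNge => ->.
Qed.

Lemma sum_phi_T i : pos_of_label s S i = p ->
  (\sum_(x <- phi_T a i s S) star_weight (phi_tau a i s S) x
   = \sum_(j <- S) star_weight s j
     + Posz (2 * (if p \in desB s then count (fun j => p < j)%N S else size S) + 1)%N)%R.
Proof.
move=> pos_p; have -> : phi_tau a i s S = t by rewrite /phi_tau pos_p.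
have -> : phi_T a i s S = rcons [seq floor j | j <- S] top.
  rewrite /phi_T /phi_tau pos_p -[RHS]undup_id ?uniq_starred //; congr (undup (rcons _ _)).
  by apply/eq_in_map => j jS; case: ltnP => // lt_jp; rewrite floor_id.
rewrite big_rcons big_map.
have -> : star_weight t top = 1%R by rewrite /star_weight count_ge_top.
rewrite (eq_big_seq (fun j => star_weight s j + Posz (2 * ((j < p)%N ==> (p \notin desB s))))%R);
  last by move=> j jS; rewrite /star_weight count_ge_floor //; lia.
rewrite big_split sumz_count /=.
have -> : count (fun j => (j < p) ==> (p \notin desB s)) S =
          (if p \in desB s then count (fun j => p < j) S else size S).
  case: ifP => pD; last by rewrite -count_predT; apply: eq_count => j; rewrite /= implybT.
  apply: eq_in_count => j jS /=; rewrite implybF -leqNgt leq_eqVlt.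
  by case: eqP => // eq_pj; move: p_notin_S; rewrite eq_pj jS.
by rewrite PoszD addrA.
Qed.

Lemma fmajS_phi i : pos_of_label s S i = p ->
  (fmajS (phi_tau a i s S) (phi_T a i s S) =
   fmajS s S + Posz (2 * ins_des a p + 2 * size (des_hi s p) + (a < 0)%R)
   - Posz ((p \in desB s) * (2 * p))
   - Posz (2 * (if p \in desB s then count (fun j => p < j)%N S else size S) + 1))%R.
Proof.
move=> pos_p; have := fmajB_ins le_p_s lt_abs_a p_lt_of_a_pos.
rewrite !fmajSE sum_phi_T // {1}/phi_tau pos_p -/t.
set X := (\sum_(_ <- _) _)%R; set c := (if _ then _ else _); set h := size _.
by set b := nat_of_bool _; set d := nat_of_bool _; lia.
Qed.

End Starred.

Definition unstarred_des s (S : seq nat) := [seq d <- desB s | d \notin S].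
Definition nondes s := [seq q <- iota 0 (size s) | q \notin desB s].

Lemma pos_of_labelE s S i :
  pos_of_label s S i.+1 = nth 0 (rev (unstarred_des s S) ++ nondes s) i.
Proof. by []. Qed.

Section Labels.

Variables (s : seq int) (S : seq nat).
Hypothesis uniq_S : uniq S.
Hypothesis sub_S : {subset S <= desB s}.

Lemma size_unstarred_des : size (unstarred_des s S) + size S = size (desB s).
Proof.
by rewrite size_filter -(count_mem_sub (uniq_desB s)) // addnC count_predC.
Qed.

Lemma desB_sub_iota : {subset desB s <= iota 0 (size s)}.
Proof. by move=> d; rewrite mem_filter => /andP[]. Qed.

Lemma size_nondes : size (nondes s) + size (desB s) = size s.
Proof.
rewrite size_filter -(count_mem_sub (iota_uniq 0 _) (uniq_desB s) desB_sub_iota) addnC.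
by rewrite count_predC size_iota.
Qed.

Lemma label_unstarred i p : i < size (unstarred_des s S) ->
  nth 0 (rev (unstarred_des s S)) i = p ->
  [/\ p < size s, p \in desB s, p \notin S &
      i.+1 + count (fun j => p < j) S = 1 + size (des_hi s p)].
Proof.
set L := unstarred_des s S => lt_iL pE.
have : p \in L by rewrite -pE -(mem_rev L) mem_nth ?size_rev.
rewrite mem_filter => /andP[pS pD].
split => //; first by move: pD; rewrite mem_desB => /andP[].
have gtn_rev : sorted (fun x y => y < x) (rev L).
  by rewrite rev_sorted; apply: sorted_filter (sorted_desB s); apply: ltn_trans.
have gtn_trans : transitive (fun x y : nat => y < x).
  by move=> y x z lt_yx lt_zy; apply: ltn_trans lt_zy lt_yx.
have lt_i_rev : i < size (rev L) by rewrite size_rev.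
have := count_rel_nth_sorted 0 gtn_trans ltnn gtn_rev lt_i_rev.
rewrite pE count_rev => cL.
rewrite /des_hi size_filter (count_split_mem _ (desB s) S) count_predI_mem_sub ?uniq_desB //.
by rewrite -count_filter (_ : [seq x <- desB s | predC (mem S) x] = L) // cL addnCA addnC.
Qed.

Lemma label_nondes k p : k < size (nondes s) -> nth 0 (nondes s) k = p ->
  [/\ p < size s, p \notin desB s, p \notin S & k + size (des_lo s p) = p].
Proof.
set L := nondes s => lt_kL pE.
have : p \in L by rewrite -pE mem_nth.
rewrite mem_filter mem_iota add0n => /andP[pD /andP[_ lt_ps]].
split => //; first by apply: contra pD; apply: sub_S.
have sorted_L : sorted ltn L by apply: sorted_filter (iota_ltn_sorted 0 _); apply: ltn_trans.
have := count_rel_nth_sorted 0 ltn_trans ltnn sorted_L lt_kL; rewrite pE => cL.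
have := filter_iota_ltn 0 (ltnW lt_ps); rewrite add0n => /(congr1 size).
rewrite size_filter size_iota (count_split_mem _ _ (desB s)).
rewrite count_predI_mem_sub ?iota_uniq ?uniq_desB //; last exact: desB_sub_iota.
by rewrite -count_filter (_ : filter _ _ = L) // cL /des_lo size_filter addnC.
Qed.

Lemma pos_of_labelP i p : 0 < i <= size s - size S -> pos_of_label s S i = p ->
  [/\ p < size s, p \notin S &
      if p \in desB s then i + count (fun j => p < j) S = 1 + size (des_hi s p)
      else i + size S = 1 + size (des_hi s p) + p].
Proof.
case: i => // i /andP[_ le_i]; rewrite pos_of_labelE nth_cat size_rev.
have szL1 := size_unstarred_des; have szL2 := size_nondes.
case: ltnP => [lt_i|le_i'] pE.
  by have [lt_ps -> pS cnt] := label_unstarred lt_i pE.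
have lt_k : i - size (unstarred_des s S) < size (nondes s).
  move: le_i szL1 szL2 le_i'.
  by move: (size (unstarred_des s S)) (size (nondes s)) (size (desB s)) => u l d; lia.
have [lt_ps pD pS cnt] := label_nondes lt_k pE; rewrite (negbTE pD); split => //.
have := perm_size (perm_desB_split s p); rewrite (negbTE pD) /= size_cat.
move: cnt szL1 le_i'; move: (size (unstarred_des s S)) (size (desB s)) => u d.
by move: (size (des_lo s p)) (size (des_hi s p)) => l h; lia.
Qed.

End Labels.

Section Labelled.

Variables (n k : nat) (s : seq int) (S : seq nat).
Hypothesis k_gt0 : 0 < k.
Hypothesis le_kn : k <= n.
Hypothesis sS_in_B : BS n.-1 k.-1 s S.

Lemma lt_abs_pi_at (a : int) : absz a = n -> forall x, absz (pi_at s x) < absz a.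
Proof. by case: sS_in_B => perm_s _ _ _ -> x; have := absz_pi_at_le x perm_s; lia. Qed.

Lemma fmajS_phi_label (a : int) i : absz a = n -> 0 < i <= n - k ->
  fmajS (phi_tau a i s S) (phi_T a i s S) =
  (fmajS s S + 2 * i%:Z - 1 - (nat_of_bool (a < 0))%:Z)%R.
Proof.
case: sS_in_B => perm_s uniq_S sub_S size_S abs_a i_range.
have size_s : size s = n.-1 by case/andP: perm_s => /eqP.
have i_lab : 0 < i <= size s - size S by lia.
set p := pos_of_label s S i; have [lt_ps pS lab] := pos_of_labelP uniq_S sub_S i_lab (erefl p).
rewrite (fmajS_phi (ltnW lt_ps) (lt_abs_pi_at abs_a) (fun _ => lt_ps) uniq_S sub_S pS) //.
rewrite /ins_des; case: (p \in desB s) lab => /= lab.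
  by move: lab; move: (count _ S) (size (des_hi s p)) => c h; case: (a < 0)%R; lia.
by move: lab; move: (size (des_hi s p)) => h; case: (a < 0)%R; lia.
Qed.

Lemma fmajS_phi_zero :
  fmajS (phi_tau (- n%:Z) 0 s S) (phi_T (- n%:Z) 0 s S) = (fmajS s S + 2 * n%:Z - 2 * k%:Z)%R.
Proof.
case: sS_in_B => perm_s uniq_S sub_S size_S.
have size_s : size s = n.-1 by case/andP: perm_s => /eqP.
have pS : size s \notin S by apply/negP => /sub_S; rewrite mem_desB ltnn.
have neg_lt0 : (- n%:Z < 0)%R by lia.
rewrite (fmajS_phi (leqnn _) (lt_abs_pi_at (abszN n)) _ uniq_S sub_S pS) //; last first.
  by rewrite ltNge ltW.
by rewrite /ins_des neg_lt0 mem_desB ltnn des_hi_size /=; lia.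
Qed.

End Labelled.

Local Open Scope ring_scope.

Theorem lemma2p6 (n k : nat) (s : seq int) (S : seq nat) :
  (1 <= k)%N -> (k <= n)%N -> BS n.-1 k.-1 s S ->
  [/\ (forall i : nat, (1 <= i <= n - k)%N ->
         fmajS (phi_tau n%:Z i s S) (phi_T n%:Z i s S) = fmajS s S + 2 * i%:Z - 1),
      (forall i : nat, (1 <= i <= n - k)%N ->
         fmajS (phi_tau (- n%:Z) i s S) (phi_T (- n%:Z) i s S) = fmajS s S + 2 * i%:Z - 2)
    & fmajS (phi_tau (- n%:Z) 0 s S) (phi_T (- n%:Z) 0 s S)
        = fmajS s S + 2 * n%:Z - 2 * k%:Z].
Proof.
move=> k_gt0 le_kn sS_in_B; split; last exact: fmajS_phi_zero.
  by move=> i /(@fmajS_phi_label _ _ _ _ k_gt0 le_kn sS_in_B n%:Z _ erefl) ->; lia.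
move=> i /(fmajS_phi_label k_gt0 le_kn sS_in_B (abszN n)) ->.
by rewrite (_ : (- n%:Z < 0) = true) //; lia.
Qed.
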